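(* In the single-node mining process with $\phi(s)=s^a$, the expected total number of hash attempts needed for the node to build a block-chain of length $L\ge1$ is at most $$\frac{D_s}{R^a}\sum_{n=0}^{L-1}\frac{1}{(n+1)^a}.$$
   Context: Fix real parameters $M>0$ (scale of the system), $R>0$ (the stake reward StakRwd), $0<D_c\le D_s$ (coin-issue difficulty constant CoinD and stake-issue difficulty constant StakD), and $0<a<1$. Put $p=D_c/D_s$, $q=1-p$. Single-node mining process with threshold function $\phi$: a node, who makes no stake transactions with anybody, starts with stake $S_0=0$. For $n=0,1,2,\dots$ the $(n+1)$-th block is produced as follows: the node makes successive hash attempts, each producing a hash value uniformly distributed on $[0,M]$, independent of all previous randomness; the block is created at the first attempt whose hash $h$ satisfies $h\le M\phi(R+S_n)/D_c$ (the coin-issue threshold), and then $S_{n+1}=S_n+R$ if moreover $h\le M\phi(R+S_n)/D_s$ (the stake-issue threshold), otherwise $S_{n+1}=S_n$. Assume $0<\phi(R+S)\le D_c$ for all $S\in\{0,R,2R,\dots,(L-1)R\}$. Time is measured as the total number of hash attempts. In this statement $\phi(s)=s^a$ (radical stake system with equal exponent $a$). *)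

From Stdlib Require Import Reals List.
Import ListNotations.
Open Scope R_scope.

(** Outcome of a single hash attempt h (uniform on [0,M]):
    - [StakeIss] : h <= M phi(R+S)/Ds  (block created and stake issued)
    - [CoinOnly] : M phi(R+S)/Ds < h <= M phi(R+S)/Dc (block created, no stake)
    - [Fail]     : h > M phi(R+S)/Dc  (no block) *)
Inductive outcome := Fail | CoinOnly | StakeIss.

(** Probability that a hash uniform on [0,M] falls in each region, given
    current stake S (thresholds lie in [0,M] under the standing assumptions). *)
Definition outcome_prob (phi : R -> R) (M Rs Dc Ds S : R) (o : outcome) : R :=
  let c := M * phi (Rs + S) / Dc in
  let s := M * phi (Rs + S) / Ds in
  match o with
  | Fail => 1 - c / M
  | CoinOnly => (c - s) / M
  | StakeIss => s / M
  end.

(** [run_prob ... S left w] = probability that, starting with stake [S] and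
    [left] blocks still to be produced, the successive attempts have outcomes
    [w] and the last remaining block is produced exactly at the last attempt
    of [w]. *)
Fixpoint run_prob (phi : R -> R) (M Rs Dc Ds : R) (S : R) (left : nat)
    (w : list outcome) : R :=
  match w with
  | [] => if Nat.eqb left 0 then 1 else 0
  | o :: w' =>
      if Nat.eqb left 0 then 0 else
      outcome_prob phi M Rs Dc Ds S o *
      run_prob phi M Rs Dc Ds
        (match o with StakeIss => S + Rs | _ => S end)
        (match o with Fail => left | _ => Nat.pred left end) w'
  end.

Fixpoint all_words (t : nat) : list (list outcome) :=
  match t with
  | O => [ [] ]
  | S t' => flat_map (fun w => [Fail :: w; CoinOnly :: w; StakeIss :: w])
                     (all_words t')
  end.

(** P(T = t), where T is the total number of hash attempts until the chain
    reaches length L (starting from stake S_0 = 0). *)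
Definition prob_T_eq (phi : R -> R) (M Rs Dc Ds : R) (L t : nat) : R :=
  fold_right Rplus 0 (map (run_prob phi M Rs Dc Ds 0 L) (all_words t)).

Definition expected_time_is (phi : R -> R) (M Rs Dc Ds : R) (L : nat) (l : R)
  : Prop :=
  infinite_sum (fun t => INR t * prob_T_eq phi M Rs Dc Ds L t) l.

(* Let [T k m] be the time needed to produce [m] more blocks from stake [k R].
   One hash attempt gives the recursion
     E T(k,m+1) = 1 + (1-c_k) E T(k,m+1) + (c_k-s_k) E T(k,m) + s_k E T(k+1,m)
   with coin and stake probabilities [c_k = phi((k+1)R)/D_c >= s_k = phi((k+1)R)/D_s].
   The sum [B(k,m) = sum_(k <= j < k+m) D_s/phi((j+1)R)] is a supersolution: plugging it
   in, the term [s_k * D_s/phi((k+1)R) = 1] cancels the [1], and what remains is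
   [-(c_k - s_k) D_s/phi((k+m)R) <= 0]. Induction on the horizon bounds every partial
   sum of the series for E T(0,L) by [B(0,L)], which for [phi(s) = s^a] is the claim. *)
From Stdlib Require Import Reals List Lra Lia.
Open Scope R_scope.

Lemma sum_map_flat_map {A B : Type} (g : B -> R) (h : A -> list B) (ws : list A) :
  fold_right Rplus 0 (map g (flat_map h ws))
  = fold_right Rplus 0 (map (fun w => fold_right Rplus 0 (map g (h w))) ws).
Proof.
  induction ws as [|w ws IH]; [reflexivity|].
  cbn [flat_map map fold_right]. rewrite map_app, fold_right_app, IH.
  generalize (map g (h w)); intros l; induction l as [|x l IHl]; simpl; [ring|].
  rewrite IHl; ring.
Qed.

Lemma sum_map_lin3 {A : Type} (f1 f2 f3 : A -> R) (x y z : R) (ws : list A) :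
  fold_right Rplus 0 (map (fun w => x * f1 w + y * f2 w + z * f3 w) ws)
  = x * fold_right Rplus 0 (map f1 ws) + y * fold_right Rplus 0 (map f2 ws)
    + z * fold_right Rplus 0 (map f3 ws).
Proof. induction ws as [|w ws IH]; simpl; [ring| rewrite IH; ring]. Qed.

Lemma infinite_sum_bounded_nonneg (u : nat -> R) (B : R) :
  (forall t, 0 <= u t) -> (forall N, sum_f_R0 u N <= B) ->
  exists l, infinite_sum u l /\ l <= B.
Proof.
  intros Hu HB.
  destruct (growing_cv (sum_f_R0 u)) as [l Hl].
  - intros N; cbn [sum_f_R0]; specialize (Hu (S N)); lra.
  - exists B; intros x [N ->]; apply HB.
  - exists l; split; [exact Hl|].
    apply Rnot_lt_le; intros HBl.
    destruct (Hl (l - B)) as [N HN]; [lra|].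
    specialize (HN N (le_n N)); specialize (HB N).
    unfold Rdist in HN; apply Rabs_def2 in HN; lra.
Qed.

Lemma weighted_sum3_le (x y z a b c a' b' c' : R) :
  0 <= x -> 0 <= y -> 0 <= z -> a <= a' -> b <= b' -> c <= c' ->
  x * a + y * b + z * c <= x * a' + y * b' + z * c'.
Proof.
  intros; apply Rplus_le_compat; [apply Rplus_le_compat|]; apply Rmult_le_compat_l; assumption.
Qed.

Section SingleNode.

Variables (phi : R -> R) (M Rs Dc Ds : R).

Definition finish_prob (k m t : nat) : R :=
  fold_right Rplus 0 (map (run_prob phi M Rs Dc Ds (INR k * Rs) m) (all_words t)).

Definition step_prob (k : nat) (o : outcome) : R :=
  outcome_prob phi M Rs Dc Ds (INR k * Rs) o.

Lemma finish_prob_0 (k m : nat) : finish_prob k m 0 = if Nat.eqb m 0 then 1 else 0.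
Proof. unfold finish_prob; simpl; destruct (Nat.eqb m 0); ring. Qed.

Lemma finish_prob_S (k m t : nat) :
  finish_prob k (S m) (S t) =
  step_prob k Fail * finish_prob k (S m) t
  + step_prob k CoinOnly * finish_prob k m t
  + step_prob k StakeIss * finish_prob (S k) m t.
Proof.
  unfold finish_prob, step_prob; cbn [all_words].
  rewrite sum_map_flat_map, <- sum_map_lin3.
  f_equal; apply map_ext; intros w.
  cbn [map fold_right run_prob Nat.eqb Nat.pred].
  rewrite S_INR, Rmult_plus_distr_r, Rmult_1_l; ring.
Qed.

Lemma finish_prob_done (k t : nat) : finish_prob k 0 (S t) = 0.
Proof.
  unfold finish_prob; cbn [all_words].
  rewrite sum_map_flat_map.
  induction (all_words t) as [|w ws IH]; simpl in *; [reflexivity|].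
  rewrite IH; ring.
Qed.

Definition mass_upto (k m N : nat) : R := sum_f_R0 (finish_prob k m) N.

Definition mean_upto (k m N : nat) : R :=
  sum_f_R0 (fun t => INR t * finish_prob k m t) N.

Lemma mass_upto_done (k N : nat) : mass_upto k 0 N = 1.
Proof.
  unfold mass_upto; induction N as [|N IH]; cbn [sum_f_R0].
  - rewrite finish_prob_0; reflexivity.
  - rewrite IH, finish_prob_done; ring.
Qed.

Lemma mean_upto_done (k N : nat) : mean_upto k 0 N = 0.
Proof.
  unfold mean_upto; induction N as [|N IH]; cbn [sum_f_R0].
  - simpl; ring.
  - rewrite IH, finish_prob_done; ring.
Qed.

Lemma mass_upto_S (k m N : nat) :
  mass_upto k (S m) (S N) =
  step_prob k Fail * mass_upto k (S m) N
  + step_prob k CoinOnly * mass_upto k m N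
  + step_prob k StakeIss * mass_upto (S k) m N.
Proof.
  unfold mass_upto; induction N as [|N IH]; cbn [sum_f_R0].
  - rewrite finish_prob_S, !finish_prob_0; cbn [Nat.eqb]; ring.
  - cbn [sum_f_R0] in IH; rewrite (finish_prob_S k m (S N)), IH at 1; ring.
Qed.

Lemma mean_upto_S (k m N : nat) :
  mean_upto k (S m) (S N) =
  step_prob k Fail * (mean_upto k (S m) N + mass_upto k (S m) N)
  + step_prob k CoinOnly * (mean_upto k m N + mass_upto k m N)
  + step_prob k StakeIss * (mean_upto (S k) m N + mass_upto (S k) m N).
Proof.
  unfold mean_upto, mass_upto; induction N as [|N IH]; cbn [sum_f_R0].
  - rewrite finish_prob_S, !finish_prob_0; cbn [Nat.eqb INR]; ring.
  - cbn [sum_f_R0] in IH; rewrite (finish_prob_S k m (S N)), IH at 1; rewrite !S_INR; ring.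
Qed.

Fixpoint time_bound (k m : nat) : R :=
  match m with
  | O => 0
  | S m' => Ds / phi (Rs + INR k * Rs) + time_bound (S k) m'
  end.

Lemma time_bound_S_last (k m : nat) :
  time_bound k (S m) = time_bound k m + Ds / phi (Rs + INR (k + m) * Rs).
Proof.
  revert k; induction m as [|m IH]; intros k.
  - simpl; rewrite Nat.add_0_r; ring.
  - change (time_bound k (S (S m))) with
      (Ds / phi (Rs + INR k * Rs) + time_bound (S k) (S m)).
    rewrite IH; replace (S k + m)%nat with (k + S m)%nat by lia; simpl; ring.
Qed.

Variable L : nat.
Hypotheses (HM : 0 < M) (HDc : 0 < Dc) (HDcs : Dc <= Ds).
Hypothesis Hphi : forall k : nat, (k < L)%nat -> 0 < phi (Rs + INR k * Rs) <= Dc.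

Lemma stake_ratio_le_coin_ratio (p : R) :
  0 < p <= Dc -> 0 < p / Ds <= p / Dc /\ p / Dc <= 1.
Proof.
  intros [Hp HpDc].
  assert (HinvDc : 0 < / Dc) by (apply Rinv_0_lt_compat; lra).
  assert (HinvDs : 0 < / Ds) by (apply Rinv_0_lt_compat; lra).
  assert (/ Ds <= / Dc) by (apply Rinv_le_contravar; lra).
  assert (Dc * / Dc = 1) by (field; lra).
  unfold Rdiv; repeat split; nra.
Qed.

Lemma step_prob_eq (k : nat) :
  let p := phi (Rs + INR k * Rs) in
  step_prob k Fail = 1 - p / Dc /\
  step_prob k CoinOnly = p / Dc - p / Ds /\
  step_prob k StakeIss = p / Ds.
Proof.
  intros p; unfold step_prob, outcome_prob; fold p.
  repeat split; field; lra.
Qed.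

Lemma step_prob_distr (k : nat) : (k < L)%nat ->
  0 <= step_prob k Fail /\ 0 <= step_prob k CoinOnly /\ 0 <= step_prob k StakeIss /\
  step_prob k Fail + step_prob k CoinOnly + step_prob k StakeIss = 1.
Proof.
  intros Hk; destruct (step_prob_eq k) as (-> & -> & ->).
  pose proof (stake_ratio_le_coin_ratio _ (Hphi k Hk)).
  repeat split; lra.
Qed.

Lemma mass_upto_le_1 (m k N : nat) : (k + m <= L)%nat -> mass_upto k m N <= 1.
Proof.
  revert k N; induction m as [|m IHm]; intros k N Hkm.
  - rewrite mass_upto_done; lra.
  - induction N as [|N IHN].
    + unfold mass_upto; simpl; rewrite finish_prob_0; simpl; lra.
    + rewrite mass_upto_S.
      destruct (step_prob_distr k) as (HF & HC & HS & Hsum); [lia|].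
      eapply Rle_trans;
        [apply (weighted_sum3_le _ _ _ _ _ _ 1 1 1); try assumption; apply IHm; lia|].
      lra.
Qed.

Lemma time_bound_step (k m : nat) : (k + m < L)%nat ->
  1 + step_prob k Fail * time_bound k (S m) + step_prob k CoinOnly * time_bound k m
    + step_prob k StakeIss * time_bound (S k) m
  <= time_bound k (S m).
Proof.
  intros Hkm.
  destruct (step_prob_eq k) as (-> & -> & ->).
  pose proof (Hphi k ltac:(lia)) as Hp.
  pose proof (stake_ratio_le_coin_ratio _ Hp) as [[_ Hsc] _].
  destruct (Hphi (k + m) Hkm) as [Hq _].
  assert (Hnext : time_bound (S k) m = time_bound k (S m) - Ds / phi (Rs + INR k * Rs))
    by (simpl; ring).
  assert (Hprev : time_bound k m = time_bound k (S m) - Ds / phi (Rs + INR (k + m) * Rs))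
    by (rewrite time_bound_S_last; ring).
  rewrite Hnext, Hprev.
  set (p := phi (Rs + INR k * Rs)) in *.
  set (q := phi (Rs + INR (k + m) * Rs)) in *.
  assert (0 < Ds / q) by (apply Rdiv_pos_pos; lra).
  assert (0 <= (p / Dc - p / Ds) * (Ds / q)) by (apply Rmult_le_pos; lra).
  match goal with |- ?lhs <= ?rhs =>
    replace lhs with (rhs - (p / Dc - p / Ds) * (Ds / q)) by (field; lra) end.
  lra.
Qed.

Lemma time_bound_nonneg (k m : nat) : (k + m <= L)%nat -> 0 <= time_bound k m.
Proof.
  revert k; induction m as [|m IH]; intros k Hkm; simpl; [lra|].
  destruct (Hphi k ltac:(lia)) as [Hp _].
  assert (0 < Ds / phi (Rs + INR k * Rs)) by (apply Rdiv_pos_pos; lra).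
  specialize (IH (S k) ltac:(lia)); lra.
Qed.

Lemma mean_upto_le_time_bound (m k N : nat) :
  (k + m <= L)%nat -> mean_upto k m N <= time_bound k m.
Proof.
  revert k N; induction m as [|m IHm]; intros k N Hkm.
  - rewrite mean_upto_done; simpl; lra.
  - induction N as [|N IHN].
    + unfold mean_upto; cbn [sum_f_R0 INR]; rewrite Rmult_0_l.
      apply time_bound_nonneg; lia.
    + rewrite mean_upto_S.
      destruct (step_prob_distr k) as (HF & HC & HS & Hsum); [lia|].
      eapply Rle_trans; [apply weighted_sum3_le; try assumption; apply Rplus_le_compat;
        [apply IHN | apply mass_upto_le_1 | apply IHm | apply mass_upto_le_1
        | apply IHm | apply mass_upto_le_1]; lia|].
      pose proof (time_bound_step k m ltac:(lia)); lra.
Qed.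

Lemma finish_prob_nonneg (t k m : nat) : (k + m <= L)%nat -> 0 <= finish_prob k m t.
Proof.
  revert k m; induction t as [|t IH]; intros k m Hkm.
  - rewrite finish_prob_0; destruct (Nat.eqb m 0); lra.
  - destruct m as [|m]; [rewrite finish_prob_done; lra|].
    rewrite finish_prob_S.
    destruct (step_prob_distr k) as (HF & HC & HS & _); [lia|].
    assert (0 <= finish_prob k (S m) t) by (apply IH; lia).
    assert (0 <= finish_prob k m t) by (apply IH; lia).
    assert (0 <= finish_prob (S k) m t) by (apply IH; lia).
    nra.
Qed.

Lemma prob_T_eq_finish_prob (t : nat) : prob_T_eq phi M Rs Dc Ds L t = finish_prob 0 L t.
Proof. unfold prob_T_eq, finish_prob; rewrite Rmult_0_l; reflexivity. Qed.

Theorem expected_time_le_time_bound :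
  exists l, expected_time_is phi M Rs Dc Ds L l /\ l <= time_bound 0 L.
Proof.
  apply infinite_sum_bounded_nonneg.
  - intros t; rewrite prob_T_eq_finish_prob.
    apply Rmult_le_pos; [apply pos_INR | apply finish_prob_nonneg; lia].
  - intros N; rewrite (sum_eq _ (fun t => INR t * finish_prob 0 L t))
      by (intros; rewrite prob_T_eq_finish_prob; reflexivity).
    apply mean_upto_le_time_bound; lia.
Qed.

End SingleNode.

Lemma Rpower_stake_split (Rs a : R) (j : nat) : 0 < Rs ->
  Rpower (Rs + INR j * Rs) a = Rpower Rs a * Rpower (INR (S j)) a.
Proof.
  intros HR.
  rewrite Rpower_mult_distr by (try apply lt_0_INR; lia || lra).
  f_equal; rewrite S_INR; ring.
Qed.

Lemma time_bound_Rpower (Rs Ds a : R) (n : nat) : 0 < Rs ->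
  time_bound (fun s => Rpower s a) Rs Ds 0 (S n)
  = Ds / Rpower Rs a * sum_f_R0 (fun j => / Rpower (INR (S j)) a) n.
Proof.
  intros HR.
  assert (Hterm : forall j, Ds / Rpower (Rs + INR j * Rs) a
                            = Ds / Rpower Rs a * / Rpower (INR (S j)) a).
  { intros j; rewrite Rpower_stake_split by exact HR.
    unfold Rpower; field; split; apply Rgt_not_eq, exp_pos. }
  induction n as [|n IH]; rewrite time_bound_S_last, Nat.add_0_l, Hterm; cbn [sum_f_R0].
  - simpl time_bound; ring.
  - rewrite IH; ring.
Qed.

Theorem mainTheorem4 (M Rs Dc Ds a : R) (L : nat)
  (HM : 0 < M) (HR : 0 < Rs) (HDc : 0 < Dc) (HDcs : Dc <= Ds)
  (Ha0 : 0 < a) (Ha1 : a < 1) (HL : (1 <= L)%nat)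
  (Hphi : forall k : nat, (k < L)%nat ->
            0 < Rpower (Rs + INR k * Rs) a <= Dc) :
  exists l : R,
    expected_time_is (fun s => Rpower s a) M Rs Dc Ds L l /\
    l <= Ds / Rpower Rs a *
         sum_f_R0 (fun n => / Rpower (INR (S n)) a) (L - 1).
Proof.
  destruct (expected_time_le_time_bound (fun s => Rpower s a) M Rs Dc Ds L HM HDc HDcs Hphi)
    as [l [Hl Hle]].
  exists l; split; [exact Hl|].
  rewrite <- time_bound_Rpower by exact HR.
  replace (S (L - 1)) with L by lia; exact Hle.
Qed.
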